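(* Let $q>0$, $q\neq1$, $\nu,t\in\mathbb{R}$. For every integer $N\ge0$, $$H_N(x,\nu t;q)=e^{\nu tD_x^2}x^N,$$ where $e^{aD_x^2}:=\sum_{n\ge0}\frac{a^n}{n!}D_x^{2n}$ (a finite sum on polynomials). In particular $\phi(x,t)=e^{\nu tD_x^2}x^N$ solves $\partial_t\phi-\nu D_x^2\phi=0$ with $\phi(x,0)=x^N$.
   Context: For $n\ge 0$ let $[n]_q=\frac{q^n-1}{q-1}$, $[0]_q!=1$, $[n]_q!=[1]_q\cdots[n]_q$, and $e_q(z)=\sum_{n\ge0}z^n/[n]_q!$. The $q$-derivative acts by $D_x x^n=[n]_qx^{n-1}$ (equivalently $D_xf(x)=\frac{f(qx)-f(x)}{(q-1)x}$). The $q$-Hermite polynomials $H_N(y;q)$ are defined by $e^{-s^2}e_q([2]_q s y)=\sum_{N\ge0}H_N(y;q)\,s^N/[N]_q!$ (formal power series in $s$), and the $q$-Kampe-de Feriet polynomials by $H_N(x,\nu t;q)=(-\nu t)^{N/2}H_N\big(\tfrac{x}{[2]_q\sqrt{-\nu t}};q\big)$, understood as the resulting polynomial in $x$ and $\nu t$. *)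

From HB Require Import structures.
From mathcomp Require Import all_boot all_order all_algebra.
From mathcomp Require Import all_classical all_reals all_analysis.
Set Implicit Arguments. Unset Strict Implicit. Unset Printing Implicit Defensive.
Import Order.TTheory GRing.Theory Num.Theory.
Local Open Scope ring_scope.

Section QDefs.
Variable R : realType.
Variable q : R.

Definition qint (n : nat) : R := (q ^+ n - 1) / (q - 1).

Definition qfact (n : nat) : R := \prod_(i < n) qint i.+1.

(* The q-Hermite polynomial H_N(y;q): N-th coefficient of the formal power
   series in s  e^{-s^2} e_q([2]_q s y) = (sum_j (-s^2)^j/j!)(sum_m ([2]_q s y)^m/[m]_q!),
   times [N]_q!  (Cauchy product: pairs (j,m) with 2j + m = N). *)
Definition qhermite (N : nat) : {poly R} :=
  qfact N *: \sum_(j < N.+1) \sum_(m < N.+1 | (2 * j + m)%N == N)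
     (((-1) ^+ j / (j`!)%:R) * (qint 2) ^+ m / qfact m) *: 'X^m.

(* The q-Kampe-de Feriet polynomial H_N(x, a; q) with a = nu t:
   (-a)^{N/2} H_N(x / ([2]_q sqrt(-a)); q), written out as the resulting
   polynomial: coefficient c_j of y^j contributes c_j [2]_q^{-j} x^j (-a)^{(N-j)/2}.
   Only terms with N - j even are kept here; the theorem separately asserts that
   the terms with N - j odd vanish (so nothing is lost). *)
Definition qKdF (N : nat) (x a : R) : R :=
  \sum_(j < size (qhermite N) | ~~ odd (N - j))
     (qhermite N)`_j * (qint 2) ^- j * x ^+ j * (- a) ^+ ((N - j)./2).

(* q-derivative on polynomials: D_x x^n = [n]_q x^{n-1}. *)
Definition qD (p : {poly R}) : {poly R} :=
  \poly_(i < (size p).-1) (qint i.+1 * p`_i.+1).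

(* e^{a D_x^2} p = sum_{n>=0} a^n/n! D_x^{2n} p; the terms with n >= size p
   vanish since D_x lowers the degree, so the sum is taken over n < size p. *)
Definition expqD2 (a : R) (p : {poly R}) : {poly R} :=
  \sum_(n < size p) (a ^+ n / (n`!)%:R) *: iter (2 * n) qD p.

End QDefs.

(* D_x maps x^n to [n]_q x^(n-1), so e^{a D_x^2} x^N is the finite sum of
   a^k/k! [N]_q!/[N-2k]_q! x^(N-2k).  Multiplying out e^{-s^2} e_q([2]_q s y),
   the coefficient of y^(N-2k) in H_N(y;q) is [N]_q! (-1)^k/k! [2]_q^(N-2k)/[N-2k]_q!,
   and only these coefficients occur; substituting y = x/([2]_q sqrt(-a)) cancels
   the powers of [2]_q and turns (-1)^k (-a)^k into a^k, which gives the same sum.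
   As a polynomial in t, e^{nu t D_x^2} x^N has derivative obtained by shifting
   k to k+1, which is exactly nu D_x^2 applied to it. *)

From HB Require Import structures.
From mathcomp Require Import all_boot all_order all_algebra.
From mathcomp Require Import all_classical all_reals all_analysis.
From mathcomp Require Import ring zify.
Import Order.TTheory GRing.Theory Num.Theory.
Set Implicit Arguments.
Unset Strict Implicit.
Local Open Scope ring_scope.

Lemma sum_ord_addn_eq (V : nmodType) (F : nat -> V) m N :
  \sum_(j < N.+1 | (m + j == N)%N) F j = if (m <= N)%N then F (N - m)%N else 0.
Proof.
case: leqP => [le_m_N | lt_N_m]; last by rewrite big_pred0 // => j; apply/eqP; lia.
have lt_sub : (N - m < N.+1)%N by lia.
by rewrite (big_pred1 (Ordinal lt_sub)) // => j; rewrite /= -val_eqE /=; apply/eqP/eqP; lia.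
Qed.

Section QDerivative.
Variables (R : realType) (q : R).

Lemma qint0 : qint q 0 = 0.
Proof. by rewrite /qint expr0 subrr mul0r. Qed.

Lemma coef_qD (p : {poly R}) i : (qD q p)`_i = qint q i.+1 * p`_i.+1.
Proof.
rewrite /qD coef_poly; case: ltnP => // le_p_i.
by rewrite nth_default ?mulr0 //; move: le_p_i; case: (size p) => //= n; lia.
Qed.

Lemma qDZ c p : qD q (c *: p) = c *: qD q p.
Proof. by apply/polyP => i; rewrite coefZ !coef_qD coefZ mulrCA. Qed.

Lemma qD_sum I (r : seq I) (P : pred I) (F : I -> {poly R}) :
  qD q (\sum_(i <- r | P i) F i) = \sum_(i <- r | P i) qD q (F i).
Proof.
apply/polyP => i; rewrite coef_qD !coef_sum mulr_sumr.
by apply: eq_bigr => j _; rewrite coef_qD.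
Qed.

Lemma qD_Xn m : qD q 'X^m = qint q m *: 'X^(m.-1).
Proof.
apply/polyP => i; rewrite coef_qD coefZ !coefXn.
case: m => [|m] /=; first by rewrite qint0 mul0r mulr0.
by rewrite eqSS; case: eqP => [->|_]; rewrite ?mulr1 ?mulr0.
Qed.

Definition qfalling (N k : nat) : R := \prod_(i < k) qint q (N - i).

Lemma iter_qD_Xn N k : iter k (qD q) 'X^N = qfalling N k *: 'X^(N - k).
Proof.
elim: k => [|k IHk]; first by rewrite /qfalling big_ord0 scale1r subn0.
by rewrite iterS IHk qDZ qD_Xn scalerA /qfalling big_ord_recr subnS.
Qed.

Lemma qfalling_eq0 N k : (N < k)%N -> qfalling N k = 0.
Proof.
by move=> lt_N_k; rewrite /qfalling (bigD1 (Ordinal lt_N_k)) //= subnn qint0 mul0r.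
Qed.

Lemma qfact_qfalling N k : (k <= N)%N -> qfact q N = qfact q (N - k) * qfalling N k.
Proof.
elim: k => [|k IHk] le_k_N; first by rewrite /qfalling big_ord0 subn0 mulr1.
have qfactS : qfact q (N - k) = qfact q (N - k.+1) * qint q (N - k).
  by rewrite /qfact -(subnSK le_k_N) big_ord_recr.
by rewrite (IHk (ltnW le_k_N)) qfactS -mulrA (mulrC (qint q _)) /qfalling big_ord_recr.
Qed.

Lemma expqD2_Xn a N : expqD2 q a 'X^N =
  \sum_(n < N.+1) (a ^+ n / n`!%:R * qfalling N (2 * n)) *: 'X^(N - 2 * n).
Proof.
by rewrite /expqD2 size_polyXn; apply: eq_bigr => n _; rewrite iter_qD_Xn scalerA.
Qed.

Lemma expqD20 p : expqD2 q 0 p = p.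
Proof.
have [-> | nz_p] := eqVneq p 0; first by rewrite /expqD2 size_poly0 big_ord0.
rewrite /expqD2 -(prednK (_ : 0 < size p)%N) ?size_poly_gt0 // big_ord_recl.
rewrite big1 => [|i _]; last by rewrite expr0n mul0r scale0r.
by rewrite addr0 expr0 fact0 divr1 scale1r.
Qed.

Lemma natr_fact_neq0 n : n`!%:R != 0 :> R.
Proof. by rewrite pnatr_eq0 -lt0n fact_gt0. Qed.

Definition qheat_poly (N : nat) (nu x : R) : {poly R} :=
  \sum_(n < N.+1) (nu ^+ n / n`!%:R * qfalling N (2 * n) * x ^+ (N - 2 * n)) *: 'X^n.

Lemma horner_qheat_poly N nu x s :
  (qheat_poly N nu x).[s] = (expqD2 q (nu * s) 'X^N).[x].
Proof.
rewrite expqD2_Xn !horner_sum; apply: eq_bigr => n _.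
by rewrite !hornerZ !hornerXn exprMn; ring.
Qed.

Lemma qD2_expqD2_Xn a N : qD q (qD q (expqD2 q a 'X^N)) =
  \sum_(n < N) (a ^+ n / n`!%:R * qfalling N (2 * n).+2) *: 'X^(N - (2 * n).+2).
Proof.
rewrite /expqD2 size_polyXn !qD_sum big_ord_recr /= !qDZ -!iterS iter_qD_Xn.
rewrite qfalling_eq0 ?scale0r ?scaler0 ?addr0; last by lia.
by apply: eq_bigr => n _; rewrite !qDZ -!iterS iter_qD_Xn scalerA.
Qed.

Lemma is_derive_expqD2_Xn (nu x s : R) N :
  is_derive s 1 (fun s' : R => (expqD2 q (nu * s') 'X^N).[x])
    (nu * (qD q (qD q (expqD2 q (nu * s) 'X^N))).[x]).
Proof.
have -> : (fun s' => (expqD2 q (nu * s') 'X^N).[x]) = horner (qheat_poly N nu x).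
  by apply/funext => s'; rewrite horner_qheat_poly.
suff -> : nu * (qD q (qD q (expqD2 q (nu * s) 'X^N))).[x] = (qheat_poly N nu x)^`().[s].
  exact: is_derive_poly.
rewrite qD2_expqD2_Xn /qheat_poly linear_sum big_ord_recl /= derivZ derivXn.
rewrite mulr0n scaler0 add0r !horner_sum mulr_sumr; apply: eq_bigr => n _.
have nz_Sn : 1 + n%:R != 0 :> R by rewrite addrC natr1 pnatr_eq0.
rewrite derivZ derivXn !hornerZ hornerMn !hornerXn /bump /= add1n add0n mulnS add2n.
rewrite factS natrM exprS exprMn -mulr_natr.
by field; rewrite natr_fact_neq0 nz_Sn.
Qed.

Definition qhermite_term (j m : nat) : R :=
  (-1) ^+ j / j`!%:R * qint q 2 ^+ m / qfact q m.

Lemma coef_qhermite N i : (qhermite q N)`_i =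
  qfact q N * \sum_(k < N.+1 | (2 * k + i == N)%N) qhermite_term k i.
Proof.
rewrite /qhermite coefZ coef_sum [in RHS]big_mkcond; congr (_ * _).
apply: eq_bigr => k _; rewrite coef_sum.
rewrite (sum_ord_addn_eq (fun m : nat => (qhermite_term k m *: 'X^m)`_i)).
case: (leqP (2 * k) N) => [le_2k_N | lt_N_2k]; last first.
  by have /negbTE -> : (2 * k + i != N)%N by apply/eqP; lia.
rewrite coefZ coefXn; have -> : (i == N - 2 * k)%N = (2 * k + i == N)%N.
  by apply/eqP/eqP; lia.
case: eqP => [sum_eq | _]; last by rewrite mulr0.
by rewrite mulr1 (_ : N - 2 * k = i)%N //; lia.
Qed.

Lemma coef_qhermite_odd N j : odd (N - j) -> (qhermite q N)`_j = 0.
Proof.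
move=> odd_Nj; rewrite coef_qhermite big1 ?mulr0 // => k /eqP eq_N.
by move: odd_Nj; rewrite (_ : N - j = 2 * k)%N ?oddM //; lia.
Qed.

Lemma size_qhermite N : (size (qhermite q N) <= N.+1)%N.
Proof.
apply/leq_sizeP => i le_N_i; rewrite coef_qhermite big_pred0 ?mulr0 // => k.
by apply/eqP; lia.
Qed.

Lemma qKdF_sum N x a : qKdF q N x a =
  \sum_(j < N.+1) (qhermite q N)`_j * (qint q 2 ^- j * x ^+ j * (- a) ^+ (N - j)./2).
Proof.
rewrite /qKdF (big_ord_widen_cond N.+1 (fun j => ~~ odd (N - j))
  (fun j => (qhermite q N)`_j * qint q 2 ^- j * x ^+ j * (- a) ^+ (N - j)./2)
  (size_qhermite N)) big_mkcond.
apply: eq_bigr => j _; case: (boolP (odd (N - j))) => [odd_Nj | _] /=.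
  by rewrite coef_qhermite_odd ?mul0r.
by case: ltnP => [_ | le_size]; rewrite ?mulrA // nth_default ?mul0r.
Qed.

End QDerivative.

Section NonDegenerate.
Variables (R : realType) (q : R).
Hypotheses (q_gt0 : 0 < q) (q_neq1 : q != 1).

Lemma qint_neq0 n : (0 < n)%N -> qint q n != 0.
Proof.
by move=> n_gt0; rewrite mulf_neq0 // ?invr_eq0 subr_eq0 // pexpr_eq1 ?ltW.
Qed.

Lemma qfact_neq0 n : qfact q n != 0.
Proof. by apply/prodf_neq0 => i _; apply: qint_neq0. Qed.

Lemma qKdF_expqD2_Xn N x a : qKdF q N x a = (expqD2 q a 'X^N).[x].
Proof.
rewrite qKdF_sum expqD2_Xn horner_sum.
under eq_bigr do rewrite coef_qhermite mulr_sumr mulr_suml.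
rewrite (exchange_big_dep xpredT) //=; apply: eq_bigr => k _.
rewrite (sum_ord_addn_eq (fun m : nat => qfact q N * qhermite_term q k m *
  (qint q 2 ^- m * x ^+ m * (- a) ^+ (N - m)./2))) hornerZ hornerXn.
case: leqP => [le_2k_N | lt_N_2k]; last by rewrite qfalling_eq0 ?mulr0 ?mul0r.
rewrite subKn // mul2n doubleK -mul2n (qfact_qfalling _ le_2k_N) /qhermite_term.
set m := (N - 2 * k)%N.
have sign2 : (-1) ^+ k * (-1) ^+ k = 1 :> R by rewrite -exprMn mulrNN mulr1 expr1n.
have nz_qint2 : qint q 2 ^+ m != 0 by rewrite expf_neq0 ?qint_neq0.
transitivity (a ^+ k / k`!%:R * qfalling q N (2 * k) * x ^+ m *
  ((-1) ^+ k * (-1) ^+ k)); last by rewrite sign2 mulr1.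
by rewrite (exprNn a); field; rewrite natr_fact_neq0 qfact_neq0 nz_qint2.
Qed.

End NonDegenerate.

Theorem mainTheorem11 (R : realType) (q nu t : R) (N : nat) :
  0 < q -> q != 1 ->
  (forall j : nat, odd (N - j) -> (qhermite q N)`_j = 0) /\
  (forall x : R, qKdF q N x (nu * t) = (expqD2 q (nu * t) 'X^N).[x]) /\
  (forall x s : R,
     is_derive s 1 (fun s' : R => (expqD2 q (nu * s') 'X^N).[x])
       (nu * (qD q (qD q (expqD2 q (nu * s) 'X^N))).[x])) /\
  (forall x : R, (expqD2 q (nu * 0) 'X^N).[x] = x ^+ N).
Proof.
move=> q_gt0 q_neq1; split; first exact: coef_qhermite_odd.
split; first by move=> x; apply: qKdF_expqD2_Xn.
split; first by move=> x s; apply: is_derive_expqD2_Xn.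
by move=> x; rewrite mulr0 expqD20 hornerXn.
Qed.
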